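(* Let $n\ge3$, $\mu\ge0$ and $\alpha\ge1$, and let $V(r,\varphi)$ be the Maxwell-ring potential in polar coordinates described in the context. Then $V_r(1,\pi/n)<0$.
   Context: Let $\zeta=2\pi/n$, $\phi_\alpha'(r)=-r^{-\alpha}$, $s=2^{-\alpha}\sum_{j=1}^{n-1}\sin^{-(\alpha-1)}(j\zeta/2)$. In polar coordinates $u=re^{i\varphi}$, the planar potential of a satellite attracted by $n$ unit masses at $e^{ij\zeta}$ and a central mass $\mu$ at $0$ (rescaled) is $$V(r,\varphi)=\frac{r^2}{2}+\frac{\mu}{s+\mu}\phi_\alpha(r)+\sum_{j=1}^n\frac1{s+\mu}\phi_\alpha\big(\|r-e^{i(j\zeta-\varphi)}\|\big),$$ so that $V_r(r,\varphi)=r-\frac{\mu}{s+\mu}r^{-\alpha}-\frac1{s+\mu}\sum_{j=1}^n\frac{r-\cos(j\zeta-\varphi)}{\|r-e^{i(j\zeta-\varphi)}\|^{\alpha+1}}$. *)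

From Stdlib Require Import Reals.
From Coquelicot Require Import Coquelicot.
Open Scope R_scope.

(* Potential phi_alpha with phi_alpha'(r) = - r^(-alpha) on r > 0
   (normalized: -ln r if alpha = 1, r^(1-alpha)/(alpha-1) otherwise). *)
Definition phi (alpha r : R) : R :=
  if Req_EM_T alpha 1 then - ln r else Rpower r (1 - alpha) / (alpha - 1).

Definition zeta (n : nat) : R := 2 * PI / INR n.

Definition s_const (n : nat) (alpha : R) : R :=
  Rpower 2 (- alpha) *
  sum_n_m (fun j => Rpower (sin (INR j * zeta n / 2)) (- (alpha - 1))) 1 (n - 1).

(* || r - e^{i psi} || for real r *)
Definition dist_unit (r psi : R) : R :=
  sqrt ((r - cos psi) ^ 2 + (sin psi) ^ 2).

(* The (rescaled) planar potential in polar coordinates u = r e^{i varphi}. *)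
Definition V (n : nat) (mu alpha : R) (r varphi : R) : R :=
  r ^ 2 / 2 + mu / (s_const n alpha + mu) * phi alpha r
  + sum_n_m (fun j => / (s_const n alpha + mu) *
                      phi alpha (dist_unit r (INR j * zeta n - varphi))) 1 n.

From Stdlib Require Import Reals Lra Lia Psatz.
From Coquelicot Require Import Coquelicot.
Open Scope R_scope.

(* Since [|1 - e^(2 i t)| = 2 sin t], the derivative at the point [e^(i pi/n)]
   midway between two masses equals [(s - 2^-alpha Y) / (s + mu)] with
   [Y = sum_(j=1..n) sin(t_j)^(1-alpha)], [t_j = (2j-1) pi / 2n], while
   [s = 2^-alpha X], [X = sum_(j=1..n-1) sin(j pi/n)^(1-alpha)].  Each [j pi/n] is
   the midpoint of [t_j] and [t_(j+1)], and [sin a sin b <= sin((a+b)/2)^2] together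
   with AM-GM gives [2 sin(j pi/n)^(1-alpha) <= sin(t_j)^(1-alpha) + sin(t_(j+1))^(1-alpha)].
   Summing over [j] yields [2 X <= 2 Y - sin(t_1)^(1-alpha) - sin(t_n)^(1-alpha) < 2 Y]. *)

Lemma Rpower_pos x y : 0 < Rpower x y.
Proof. exact (exp_pos _). Qed.

Lemma Rpower_1_l y : Rpower 1 y = 1.
Proof. unfold Rpower; rewrite ln_1, Rmult_0_r; apply exp_0. Qed.

Lemma sin_mul_le_sqr_sin_mid a b : sin a * sin b <= sin ((a + b) / 2) ^ 2.
Proof.
  set (m := (a + b) / 2); set (d := (a - b) / 2).
  replace a with (m + d) by (unfold m, d; lra).
  replace b with (m - d) by (unfold m, d; lra).
  rewrite sin_plus, sin_minus.
  pose proof (sin2_cos2 m); pose proof (sin2_cos2 d); unfold Rsqr in *.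
  nra.
Qed.

(* AM-GM: [x^-be + y^-be >= 2 (x y)^(-be/2) >= 2 z^-be]. *)
Lemma Rpower_opp_AM_GM x y z be :
  0 < x -> 0 < y -> 0 < z -> x * y <= z ^ 2 -> 0 <= be ->
  2 * Rpower z (- be) <= Rpower x (- be) + Rpower y (- be).
Proof.
  intros Hx Hy Hz Hxyz Hbe.
  assert (Hsplit : forall w, Rpower w (- be) = Rpower w (- (be / 2)) * Rpower w (- (be / 2))).
  { intro w; rewrite <- Rpower_plus; f_equal; lra. }
  rewrite !Hsplit.
  set (p := Rpower x (- (be / 2))); set (q := Rpower y (- (be / 2))).
  set (u := Rpower z (- (be / 2))).
  assert (Huu_pq : u * u <= p * q).
  { unfold u, p, q; rewrite !Rpower_mult_distr, !Rpower_Ropp by lra.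
    apply Rinv_le_contravar; [apply Rpower_pos|].
    apply Rle_Rpower_l; nra. }
  pose proof (Rle_0_sqr (p - q)); unfold Rsqr in *; nra.
Qed.

Lemma Rpower_sin_midpoint_convex a b be :
  0 < a < PI -> 0 < b < PI -> 0 <= be ->
  2 * Rpower (sin ((a + b) / 2)) (- be) <= Rpower (sin a) (- be) + Rpower (sin b) (- be).
Proof.
  intros Ha Hb Hbe.
  apply Rpower_opp_AM_GM; try apply sin_gt_0; try lra.
  apply sin_mul_le_sqr_sin_mid.
Qed.

Lemma sum_n_m_pos (g : nat -> R) a b : (a <= b)%nat -> (forall k, 0 < g k) -> 0 < sum_n_m g a b.
Proof.
  intros Hab Hg; rewrite sum_Sn_m by exact Hab; unfold plus; simpl.
  enough (0 <= sum_n_m g (S a) b) by (specialize (Hg a); lra).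
  apply Rle_trans with (sum_n_m (fun _ => 0) (S a) b).
  - rewrite sum_n_m_const; lra.
  - apply sum_n_m_le; intro k; apply Rlt_le, Hg.
Qed.

Lemma sum_n_m_interlace_lt (u v : nat -> R) n : (1 <= n)%nat ->
  (forall k, (1 <= k < n)%nat -> 2 * u k <= v k + v (S k)) ->
  0 < v 1%nat -> 0 < v n ->
  sum_n_m u 1 (n - 1) < sum_n_m v 1 n.
Proof.
  intros Hn Huv Hv1 Hvn.
  assert (Hpartial : forall k, (k < n)%nat ->
    2 * sum_n_m u 1 k + v 1%nat + v (S k) <= 2 * sum_n_m v 1 (S k)).
  { induction k as [|k IH]; intros Hk.
    - rewrite sum_n_n, sum_n_m_zero by lia; unfold zero; simpl; lra.
    - rewrite (sum_n_Sm u), (sum_n_Sm v) by lia; unfold plus; simpl.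
      specialize (IH ltac:(lia)); specialize (Huv (S k) ltac:(lia)); lra. }
  specialize (Hpartial (n - 1)%nat ltac:(lia)).
  replace (S (n - 1)) with n in Hpartial by lia.
  lra.
Qed.

(* Half the angle between mass [j] and the satellite at [e^(i pi/n)]. *)
Definition half_angle (n j : nat) : R := (2 * INR j - 1) * PI / (2 * INR n).

Lemma zeta_sub_angle n j : (0 < n)%nat ->
  INR j * zeta n - PI / INR n = 2 * half_angle n j.
Proof.
  intros Hn; assert (0 < INR n) by (apply lt_0_INR; lia).
  unfold zeta, half_angle; field; lra.
Qed.

Lemma half_angle_bounds n j : (1 <= j <= n)%nat -> 0 < half_angle n j < PI.
Proof.
  intros Hj; unfold half_angle.
  assert (1 <= INR j) by (apply (le_INR 1); lia).
  assert (INR j <= INR n) by (apply le_INR; lia).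
  pose proof PI_RGT_0.
  split.
  - apply Rdiv_lt_0_compat; nra.
  - apply Rlt_div_l; nra.
Qed.

Lemma sin_half_angle_pos n j : (1 <= j <= n)%nat -> 0 < sin (half_angle n j).
Proof. intros Hj; apply sin_gt_0; apply half_angle_bounds, Hj. Qed.

Lemma sum_sin_Rpower_lt n be : (1 <= n)%nat -> 0 <= be ->
  sum_n_m (fun j => Rpower (sin (INR j * PI / INR n)) (- be)) 1 (n - 1)
  < sum_n_m (fun j => Rpower (sin (half_angle n j)) (- be)) 1 n.
Proof.
  intros Hn Hbe.
  assert (Hnpos : 0 < INR n) by (apply lt_0_INR; lia).
  apply sum_n_m_interlace_lt; try apply Rpower_pos; [exact Hn|].
  intros k Hk.
  replace (INR k * PI / INR n) with ((half_angle n k + half_angle n (S k)) / 2)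
    by (unfold half_angle; rewrite S_INR; field; lra).
  apply Rpower_sin_midpoint_convex; try apply half_angle_bounds; lia || lra.
Qed.

Lemma is_derive_sum_n_m (f : nat -> R -> R) (d : nat -> R) a b x :
  (forall j, (a <= j <= b)%nat -> is_derive (f j) x (d j)) ->
  is_derive (fun r => sum_n_m (fun j => f j r) a b) x (sum_n_m d a b).
Proof.
  intros Hd; destruct (Compare_dec.le_lt_dec a b) as [Hab|Hba].
  - induction Hab as [|b Hab IH].
    + rewrite sum_n_n; apply (is_derive_ext (f a)); [intro; now rewrite sum_n_n|].
      apply Hd; lia.
    + rewrite sum_n_Sm by lia.
      apply (is_derive_ext (fun r => sum_n_m (fun j => f j r) a b + f (S b) r)).
      { intro; now rewrite sum_n_Sm by lia. }
      apply (@is_derive_plus R_AbsRing R_NormedModule); [apply IH|]; intros; apply Hd; lia.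
  - rewrite sum_n_m_zero by exact Hba.
    apply (is_derive_ext (fun _ => 0)); [intro; now rewrite sum_n_m_zero|].
    auto_derive; reflexivity.
Qed.

Lemma is_derive_phi alpha x : 0 < x -> is_derive (phi alpha) x (- Rpower x (- alpha)).
Proof.
  intros Hx; unfold phi; destruct (Req_EM_T alpha 1) as [->|Hne].
  - auto_derive; [exact Hx|].
    rewrite Rpower_Ropp, Rpower_1 by exact Hx; ring.
  - apply (is_derive_ext (fun r => / (alpha - 1) * Rpower r (1 - alpha))).
    { intro; apply Rmult_comm. }
    replace (- Rpower x (- alpha)) with (/ (alpha - 1) * ((1 - alpha) * Rpower x (1 - alpha - 1))).
    + apply is_derive_scal, is_derive_Reals, derivable_pt_lim_power, Hx.
    + replace (1 - alpha - 1) with (- alpha) by ring; field; lra.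
Qed.

Lemma is_derive_dist_unit x psi : 0 < dist_unit x psi ->
  is_derive (fun r => dist_unit r psi) x ((x - cos psi) / dist_unit x psi).
Proof.
  unfold dist_unit; intros Hd.
  assert (Hrad : 0 < (x - cos psi) ^ 2 + sin psi ^ 2).
  { apply Rnot_le_lt; intro Hle; rewrite sqrt_neg_0 in Hd by exact Hle; lra. }
  auto_derive; [simpl in Hrad; lra|].
  replace ((x + - cos psi) * ((x + - cos psi) * 1) + sin psi * (sin psi * 1))
    with ((x - cos psi) ^ 2 + sin psi ^ 2) by ring.
  field; lra.
Qed.

Lemma dist_unit_1_double t : 0 <= sin t -> dist_unit 1 (2 * t) = 2 * sin t.
Proof.
  intros Ht; unfold dist_unit.
  rewrite <- (sqrt_square (2 * sin t)) by lra; f_equal.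
  rewrite sin_2a, cos_2a_sin.
  pose proof (sin2_cos2 t); unfold Rsqr in *; nra.
Qed.

(* With [d = 2 sin t], the chain rule gives [- d^-alpha (1 - cos 2t) / d] and
   [1 - cos 2t = 2 sin^2 t]. *)
Lemma is_derive_phi_dist_unit_double alpha t : 0 < sin t ->
  is_derive (fun r => phi alpha (dist_unit r (2 * t))) 1
    (- (Rpower 2 (- alpha) * Rpower (sin t) (- (alpha - 1)))).
Proof.
  intros Ht.
  assert (Hd : dist_unit 1 (2 * t) = 2 * sin t) by (apply dist_unit_1_double; lra).
  replace (- (Rpower 2 (- alpha) * Rpower (sin t) (- (alpha - 1))))
    with ((1 - cos (2 * t)) / dist_unit 1 (2 * t) * - Rpower (dist_unit 1 (2 * t)) (- alpha)).
  - apply (@is_derive_comp R_AbsRing R_NormedModule (phi alpha) (fun r => dist_unit r (2 * t)));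
      [apply is_derive_phi | apply is_derive_dist_unit]; lra.
  - rewrite Hd, cos_2a_sin, <- Rpower_mult_distr by lra.
    replace (- (alpha - 1)) with (1 + - alpha) by ring.
    rewrite Rpower_plus, Rpower_1 by exact Ht.
    field; lra.
Qed.

Lemma is_derive_V_at_1 n mu alpha :
  (1 <= n)%nat -> s_const n alpha + mu <> 0 ->
  is_derive (fun r => V n mu alpha r (PI / INR n)) 1
    ((s_const n alpha - Rpower 2 (- alpha)
        * sum_n_m (fun j => Rpower (sin (half_angle n j)) (- (alpha - 1))) 1 n)
     / (s_const n alpha + mu)).
Proof.
  intros Hn Hsmu; unfold V; set (s := s_const n alpha) in *.
  set (K := Rpower 2 (- alpha)).
  set (Y := sum_n_m (fun j => Rpower (sin (half_angle n j)) (- (alpha - 1))) 1 n).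
  apply (is_derive_ext (fun r => r ^ 2 / 2 + mu / (s + mu) * phi alpha r
    + sum_n_m (fun j => / (s + mu) * phi alpha (dist_unit r (2 * half_angle n j))) 1 n)).
  { intro r; f_equal; apply sum_n_m_ext; intro j; rewrite zeta_sub_angle by lia; reflexivity. }
  replace ((s - K * Y) / (s + mu))
    with (1 + mu / (s + mu) * - Rpower 1 (- alpha)
          + sum_n_m (fun j => / (s + mu) * - (K * Rpower (sin (half_angle n j)) (- (alpha - 1)))) 1 n).
  - apply (@is_derive_plus R_AbsRing R_NormedModule);
      [apply (@is_derive_plus R_AbsRing R_NormedModule)|].
    + auto_derive; [exact I | field].
    + apply is_derive_scal, is_derive_phi; lra.
    + apply is_derive_sum_n_m; intros j Hj.
      apply is_derive_scal, is_derive_phi_dist_unit_double, sin_half_angle_pos, Hj.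
  - assert (Hsum : sum_n_m (fun j => / (s + mu) * - (K * Rpower (sin (half_angle n j)) (- (alpha - 1)))) 1 n
                   = mult (- (K / (s + mu))) Y).
    { unfold Y; rewrite <- (@sum_n_m_mult_l R_Ring).
      apply sum_n_m_ext; intro j; unfold mult; simpl; field; exact Hsmu. }
    rewrite Hsum, Rpower_1_l; unfold mult; simpl; field; exact Hsmu.
Qed.

Lemma s_const_eq n alpha : (0 < n)%nat ->
  s_const n alpha = Rpower 2 (- alpha)
    * sum_n_m (fun j => Rpower (sin (INR j * PI / INR n)) (- (alpha - 1))) 1 (n - 1).
Proof.
  intros Hn; assert (0 < INR n) by (apply lt_0_INR; lia).
  unfold s_const; f_equal; apply sum_n_m_ext; intro j.
  unfold zeta; do 2 f_equal; field; lra.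
Qed.

Theorem mainTheorem8 (n : nat) (mu alpha : R) :
  (3 <= n)%nat -> 0 <= mu -> 1 <= alpha ->
  Derive (fun r => V n mu alpha r (PI / INR n)) 1 < 0.
Proof.
  intros Hn Hmu Halpha.
  set (K := Rpower 2 (- alpha)).
  set (X := sum_n_m (fun j => Rpower (sin (INR j * PI / INR n)) (- (alpha - 1))) 1 (n - 1)).
  set (Y := sum_n_m (fun j => Rpower (sin (half_angle n j)) (- (alpha - 1))) 1 n).
  assert (Hs : s_const n alpha = K * X) by (apply s_const_eq; lia).
  assert (HK : 0 < K) by apply Rpower_pos.
  assert (HX : 0 < X) by (apply sum_n_m_pos; [lia | intro; apply Rpower_pos]).
  assert (HXY : X < Y) by (apply sum_sin_Rpower_lt; lia || lra).
  assert (Hsmu : 0 < s_const n alpha + mu) by (rewrite Hs; nra).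
  erewrite is_derive_unique by (apply is_derive_V_at_1; lia || lra).
  fold K Y; rewrite Hs in *.
  apply Rdiv_neg_pos; nra.
Qed.
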